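(* Let $\beta=(\beta_{ij})_{i,j\ge 0,\ i+j\le 6}$ be a real sequence such that $\mathcal M(3)(\beta)$ is positive semidefinite, $\mathcal M(2)(\beta)$ is positive definite, and $\operatorname{rank}\mathcal M(3)=\operatorname{card}\mathcal V=7$, where $\mathcal V=\{(x_1,y_1),\dots,(x_7,y_7)\}$ is the algebraic variety of $\mathcal M(3)$. Suppose the columns $\mathcal B_1=\{1,X,Y,X^2,XY,Y^2,X^3\}$ form a basis of the column space of $\mathcal M(3)$. Then $\beta$ has a representing measure if and only if $\mathcal M(3)$ is weakly consistent and, for all $i,j\ge0$ with $0\le i+j\le 2$, $$\Lambda_\beta\big(x^iy^j(x^4-a_{00}-a_{10}x-a_{01}y-a_{20}x^2-a_{11}xy-a_{02}y^2-a_{30}x^3)\big)=0,$$ where $(a_{00},a_{10},a_{01},a_{20},a_{11},a_{02},a_{30})^T=W_{\mathcal B_1}^{-1}(x_1^4,\dots,x_7^4)^T$.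
   Context: The moment matrix $\mathcal M(3)(\beta)$ has rows and columns indexed by $1,X,Y,X^2,XY,Y^2,X^3,X^2Y,XY^2,Y^3$ in this order, with entry $\beta_{i+k,j+l}$ in row $X^iY^j$ and column $X^kY^l$; $\mathcal M(2)(\beta)$ is its principal submatrix indexed by monomials of degree $\le 2$. For $p(x,y)=\sum a_{ij}x^iy^j$ of degree $\le 3$, $p(X,Y)=\sum a_{ij}X^iY^j$ is the corresponding linear combination of columns. The algebraic variety is $\mathcal V=\bigcap\{\mathcal Z(p):\deg p\le 3,\ p(X,Y)=\mathbf 0\}$ with $\mathcal Z(p)$ the real zero set of $p$. The Riesz functional $\Lambda_\beta$ on polynomials of degree $\le 6$ is $\Lambda_\beta(\sum a_{ij}x^iy^j)=\sum a_{ij}\beta_{ij}$. A representing measure is a positive Borel measure $\mu$ on $\mathbb R^2$ with $\beta_{ij}=\int x^iy^j\,d\mu$ for $i+j\le 6$. $\mathcal M(3)$ (or $\beta$) is weakly consistent if every polynomial $p$ of degree $\le 3$ vanishing on $\mathcal V$ satisfies $p(X,Y)=\mathbf 0$. The generalized Vandermonde matrix $W$ is the $7\times 10$ matrix whose $k$-th row is $(1,x_k,y_k,x_k^2,x_ky_k,y_k^2,x_k^3,x_k^2y_k,x_ky_k^2,y_k^3)$, with columns labeled $1,X,Y,\dots,Y^3$; for a set $\mathcal B$ of column labels, $W_{\mathcal B}$ is the submatrix of $W$ consisting of the columns in $\mathcal B$ (in the given order). *)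

From HB Require Import structures.
From mathcomp Require Import all_boot all_order all_algebra.
From mathcomp Require Import all_classical all_reals all_analysis.
Set Implicit Arguments. Unset Strict Implicit. Unset Printing Implicit Defensive.
Import Order.TTheory GRing.Theory Num.Theory.
Local Open Scope ring_scope.

Definition mono_exps : seq (nat * nat) :=
  [:: (0,0); (1,0); (0,1); (2,0); (1,1); (0,2); (3,0); (2,1); (1,2); (0,3)]%N.
Definition mono (k : 'I_10) : nat * nat := nth (0,0)%N mono_exps k.

Section Moments.
Variable R : realType.

(* A (truncated) bivariate sequence; only entries with i+j <= 6 are ever used. *)
Definition M3 (beta : nat -> nat -> R) : 'M[R]_10 :=
  \matrix_(r < 10, c < 10) beta ((mono r).1 + (mono c).1)%N ((mono r).2 + (mono c).2)%N.

Definition M2 (beta : nat -> nat -> R) : 'M[R]_6 :=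
  \matrix_(r < 6, c < 6) M3 beta (widen_ord (isT : (6 <= 10)%N) r)
                               (widen_ord (isT : (6 <= 10)%N) c).

Definition psd n (A : 'M[R]_n) : Prop := forall v : 'cV[R]_n, 0 <= (v^T *m A *m v) 0 0.
Definition pd n (A : 'M[R]_n) : Prop :=
  forall v : 'cV[R]_n, v != 0 -> 0 < (v^T *m A *m v) 0 0.

Definition peval3 (a : 'cV[R]_10) (z : R * R) : R :=
  \sum_(k < 10) a k 0 * z.1 ^+ (mono k).1 * z.2 ^+ (mono k).2.

(* p(X,Y) = sum a_k (column k of M(3)) = M(3) *m a. *)
Definition colpoly (beta : nat -> nat -> R) (a : 'cV[R]_10) : 'cV[R]_10 := M3 beta *m a.

Definition variety (beta : nat -> nat -> R) (z : R * R) : Prop :=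
  forall a : 'cV[R]_10, colpoly beta a = 0 -> peval3 a z = 0.

Definition weakly_consistent (beta : nat -> nat -> R) : Prop :=
  forall a : 'cV[R]_10, (forall z, variety beta z -> peval3 a z = 0) -> colpoly beta a = 0.

Definition B1 (k : 'I_7) : 'I_10 := widen_ord (isT : (7 <= 10)%N) k.

Definition cols_basis m n p (f : 'I_p -> 'I_n) (A : 'M[R]_(m, n)) : Prop :=
  row_free (colsub f A)^T /\ ((colsub f A)^T == A^T)%MS.

Definition Wmx (pts : 'I_7 -> R * R) : 'M[R]_(7, 10) :=
  \matrix_(k < 7, c < 10) ((pts k).1 ^+ (mono c).1 * (pts k).2 ^+ (mono c).2).
Definition WB p (f : 'I_p -> 'I_10) (pts : 'I_7 -> R * R) : 'M[R]_(7, p) :=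
  colsub f (Wmx pts).

(* Riesz functional on a polynomial given as a list of terms (coef, (i, j))
   meaning sum coef * x^i y^j. *)
Definition Riesz (beta : nat -> nat -> R) (s : seq (R * (nat * nat))) : R :=
  \sum_(t <- s) t.1 * beta t.2.1 t.2.2.

Definition shifted_relation (a : 'cV[R]_7) (i j : nat) : seq (R * (nat * nat)) :=
  (1, (i + 4, j)%N) ::
  [seq (- a k 0, (i + (mono (B1 k)).1, j + (mono (B1 k)).2)%N) | k <- enum 'I_7].

Definition has_rep_measure (beta : nat -> nat -> R) : Prop :=
  exists mu : {measure set (R * R)%type -> \bar R},
    forall i j : nat, (i + j <= 6)%N ->
      mu.-integrable setT (fun z : R * R => (z.1 ^+ i * z.2 ^+ j)%:E) /\
      (\int[mu]_z (z.1 ^+ i * z.2 ^+ j)%:E = (beta i j)%:E)%E.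

End Moments.

(* Since the columns B1 form a basis, M(3) = M_B C for a 7 x 10 matrix C, and
   the kernel of M(3) is spanned by the columns of 1 - S C (S selecting the columns B1), whose
   nonzero columns are the relations X^2Y, XY^2, Y^3 = combinations of B1.  Hence z lies in V
   exactly when its row of monomials is annihilated by 1 - S C.
   Necessity: for p in the kernel, Lambda(p^2) = p^T M(3) p = 0, so a representing measure is
   carried by V and Lambda kills every polynomial of degree <= 6 vanishing on V.  This gives weak
   consistency, and the Riesz conditions because x^i y^j (x^4 - sum a_k B1_k) vanishes on V.
   Sufficiency: weak consistency makes W_B1 invertible, so there are weights rho reproducing the
   moments indexed by B1.  The column relations of M(3), the same relations on V, and the Riesz
   conditions for x^4 reduce every moment of degree <= 6 to those indexed by B1, so beta is the
   moment sequence of sum_k rho_k delta_(x_k, y_k).  Then M(3) = W^T diag(rho) W, and testing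
   positivity of M(3) on Lagrange interpolation polynomials gives rho >= 0. *)

From HB Require Import structures.
From mathcomp Require Import all_boot all_order all_algebra.
From mathcomp Require Import all_classical all_reals all_analysis.
From mathcomp Require Import measurable_realfun.
From mathcomp.zify Require Import zify.
From mathcomp.algebra_tactics Require Import ring.
Import Order.TTheory GRing.Theory Num.Theory.
Set Implicit Arguments. Unset Strict Implicit. Unset Printing Implicit Defensive.
Local Open Scope ring_scope.

Lemma colsub_mulmx (R : pzRingType) m n p (f : 'I_p -> 'I_n) (A : 'M[R]_(m, n)) :
  colsub f A = A *m colsub f 1%:M.
Proof. by rewrite mulmx_colsub mulmx1. Qed.

Lemma unitmx_of_mulmx_eq0 (R : fieldType) n (A : 'M[R]_n) :
  (forall v : 'cV[R]_n, A *m v = 0 -> v = 0) -> A \in unitmx.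
Proof.
move=> inj; rewrite -unitmx_tr -row_free_unit -kermx_eq0.
apply/rowV0P => u /sub_kermxP uA0; apply: trmx_inj; rewrite trmx0; apply: inj.
by rewrite -[A]trmxK -trmx_mul uA0 trmx0.
Qed.

(* Column j of relation_mx f C encodes the relation "column j = sum_k C k j * column (f k)". *)
Definition relation_mx (R : pzRingType) n p (f : 'I_p -> 'I_n) (C : 'M[R]_(p, n)) : 'M[R]_n :=
  1%:M - colsub f 1%:M *m C.

Section ColumnBasis.
Variables (R : realType) (m n p : nat) (f : 'I_p -> 'I_n) (A : 'M[R]_(m, n)).
Hypothesis basisA : cols_basis f A.

Lemma cols_basis_inj (v : 'cV[R]_p) : colsub f A *m v = 0 -> v = 0.
Proof.
case: basisA => free _ Av0; apply: trmx_inj; apply/eqP.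
by rewrite trmx0 -(mulmx_free_eq0 _ free) -trmx_mul Av0 trmx0.
Qed.

Lemma cols_basis_span : exists C : 'M[R]_(p, n), A = colsub f A *m C.
Proof.
case: basisA => _ /andP[_ /submxP[D AD]].
by exists D^T; apply: trmx_inj; rewrite trmx_mul trmxK.
Qed.

Variable C : 'M[R]_(p, n).
Hypothesis AC : A = colsub f A *m C.

Lemma mulmx_relation_mx : A *m relation_mx f C = 0.
Proof. by rewrite mulmxBr mulmx1 mulmxA -colsub_mulmx -AC subrr. Qed.

Lemma relation_mx_ker (v : 'cV[R]_n) : A *m v = 0 -> relation_mx f C *m v = v.
Proof.
move=> Av0; have Cv0 : C *m v = 0 by apply: cols_basis_inj; rewrite mulmxA -AC.
by rewrite mulmxBl mul1mx -mulmxA Cv0 mulmx0 subr0.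
Qed.

End ColumnBasis.

Definition mon (R : comPzRingType) (e : nat * nat) (z : R * R) : R := z.1 ^+ e.1 * z.2 ^+ e.2.
Lemma monD (R : comPzRingType) e f (z : R * R) : mon (e + f) z = mon e z * mon f z.
Proof. rewrite /mon /= !exprD; ring. Qed.
Definition weight (e : nat * nat) : nat := 8 * e.1 + 9 * e.2.
Lemma weightD e f : weight (e + f) = (weight e + weight f)%N.
Proof. rewrite /weight /=; lia. Qed.

Lemma mono_B1_bounds (k : 'I_7) :
  (weight (mono (B1 k)) <= 24)%N /\ ((mono (B1 k)).1 + (mono (B1 k)).2 <= 3)%N.
Proof. by case: k => [[|[|[|[|[|[|[|k]]]]]]] lt_k7]. Qed.

Lemma exps_addE (e f : nat * nat) : e + f = (e.1 + f.1, e.2 + f.2)%N.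
Proof. by []. Qed.

Lemma deg6_cases (e : nat * nat) : (e.1 + e.2 <= 6)%N ->
  [\/ exists k, e = mono (B1 k),
      exists (j : 'I_10) e',
        [/\ e = e' + mono j, (e'.1 + e'.2 <= 3)%N & (24 < weight (mono j))%N]
    | exists2 i, (i <= 2)%N & e = (i + 4, 0)%N].
Proof.
case: e => x y /= le_e6.
case: (leqP 3 y) => [le3y | lt_y3].
  constructor 2; exists (@Ordinal 10 9 isT), (x, y - 3)%N.
  by split; rewrite ?exps_addE /=; [congr pair; lia | lia |].
case: y lt_y3 le_e6 => [|[|[|y]]] // _ le_e6.
- case: (leqP 4 x) => [le4x | ].
    by constructor 3; exists (x - 4)%N; [|congr pair]; lia.
  case: x {le_e6} => [|[|[|[|x]]]] // _; constructor 1.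
  + by exists (@Ordinal 7 0 isT).
  + by exists (@Ordinal 7 1 isT).
  + by exists (@Ordinal 7 3 isT).
  + by exists (@Ordinal 7 6 isT).
- case: (leqP 2 x) => [le2x | ].
    constructor 2; exists (@Ordinal 10 7 isT), (x - 2, 0)%N.
    by split; rewrite ?exps_addE /=; [congr pair; lia | lia |].
  case: x {le_e6} => [|[|x]] // _; constructor 1.
  + by exists (@Ordinal 7 2 isT).
  + by exists (@Ordinal 7 4 isT).
- case: (leqP 1 x) => [le1x | ].
    constructor 2; exists (@Ordinal 10 8 isT), (x - 1, 0)%N.
    by split; rewrite ?exps_addE /=; [congr pair; lia | lia |].
  by case: x {le_e6} => [|x] // _; constructor 1; exists (@Ordinal 7 5 isT).
Qed.

Definition B1_rel (R : pzRingType) (g : nat * nat -> R) (j : nat * nat) (w : 'cV[R]_7)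
    (e : nat * nat) : Prop :=
  g (e + j) = \sum_k w k 0 * g (e + mono (B1 k)).

(* The weight 8x + 9y is at most 24 on B1 but exceeds 24 on X^2Y, XY^2, Y^3 and X^4,
   so each relation expresses D at a monomial through monomials of smaller weight. *)
Lemma B1_rel_vanish (R : pzRingType) (D : nat * nat -> R) (C : 'M[R]_(7, 10)) (a : 'cV[R]_7) :
  (forall k, D (mono (B1 k)) = 0) ->
  (forall (j : 'I_10) e, (e.1 + e.2 <= 3)%N -> B1_rel D (mono j) (col j C) e) ->
  (forall i, (i <= 2)%N -> B1_rel D (4, 0)%N a (i, 0)%N) ->
  forall e, (e.1 + e.2 <= 6)%N -> D e = 0.
Proof.
move=> D_B1 D_C D_a e; move: {2}(weight e).+1 (ltnSn (weight e)) => n.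
elim: n e => [//|n IH] e lt_en le_e6.
have D_low (w : 'cV[R]_7) e' : (weight e' + 24 < weight e)%N -> (e'.1 + e'.2 <= 3)%N ->
    \sum_k w k 0 * D (e' + mono (B1 k)) = 0.
  move=> lt_e'e le_e'3; apply: big1 => k _; rewrite IH ?mulr0 //.
    by rewrite weightD; have [] := mono_B1_bounds k; lia.
  by rewrite exps_addE /=; have [] := mono_B1_bounds k; lia.
case: (deg6_cases le_e6) => [[k ->] | [j [e' [e_eq le_e'3 lt24j]]] | [i le_i2 e_eq]].
- exact: D_B1.
- by rewrite e_eq D_C //; apply: D_low; rewrite // e_eq weightD; lia.
- have := D_a i le_i2; rewrite /B1_rel exps_addE /= !addn0 -e_eq => ->.
  by apply: D_low; rewrite /weight ?e_eq /=; lia.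
Qed.

Section Polynomials.
Variable R : realType.
Implicit Types (beta : nat -> nat -> R) (z : R * R) (pts : 'I_7 -> R * R).

Definition mom beta (e : nat * nat) : R := beta e.1 e.2.

Definition monrow z : 'rV[R]_10 := \row_k mon (mono k) z.

Lemma peval3E (a : 'cV[R]_10) z : peval3 a z = (monrow z *m a) 0 0.
Proof. by rewrite mxE; apply: eq_bigr => k _; rewrite mxE /mon; ring. Qed.

Lemma M3E beta r c : M3 beta r c = mom beta (mono r + mono c).
Proof. by rewrite mxE. Qed.

Lemma Wmx_mulE pts (a : 'cV[R]_10) k : (Wmx pts *m a) k 0 = peval3 a (pts k).
Proof.
have rowk : row k (Wmx pts) = monrow (pts k) by apply/rowP => c; rewrite !mxE.
by rewrite peval3E -rowk -row_mul [RHS]mxE.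
Qed.

Lemma WB_mulE pts (w : 'cV[R]_7) k :
  (WB B1 pts *m w) k 0 = \sum_l w l 0 * mon (mono (B1 l)) (pts k).
Proof. by rewrite mxE; apply: eq_bigr => l _; rewrite !mxE mulrC. Qed.

Lemma peval3_relation_col (C : 'M[R]_(7, 10)) j z :
  peval3 (col j (relation_mx B1 C)) z = (monrow z *m relation_mx B1 C) 0 j.
Proof. by rewrite peval3E colE mulmxA -colE mxE. Qed.

Lemma colpoly_relation_col beta (C : 'M[R]_(7, 10)) j :
  M3 beta = colsub B1 (M3 beta) *m C -> colpoly beta (col j (relation_mx B1 C)) = 0.
Proof. by move=> MC; rewrite /colpoly colE mulmxA mulmx_relation_mx // mul0mx. Qed.

Lemma varietyP beta (C : 'M[R]_(7, 10)) z :
  cols_basis B1 (M3 beta) -> M3 beta = colsub B1 (M3 beta) *m C ->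
  variety beta z <-> monrow z *m relation_mx B1 C = 0.
Proof.
move=> basisM MC; split => [zV | zK a Ma0].
  apply/rowP => j; rewrite [RHS]mxE -peval3_relation_col.
  exact/zV/colpoly_relation_col.
by rewrite peval3E -(relation_mx_ker basisM MC Ma0) mulmxA zK mul0mx mxE.
Qed.

Lemma WB_unitmx beta pts : cols_basis B1 (M3 beta) ->
  (forall z, variety beta z -> exists k, pts k = z) -> weakly_consistent beta ->
  WB B1 pts \in unitmx.
Proof.
move=> basisM Vpts wc; apply: unitmx_of_mulmx_eq0 => u WBu0.
apply: (cols_basis_inj basisM); rewrite colsub_mulmx -mulmxA; apply: wc => z /Vpts[k <-].
by rewrite -Wmx_mulE mulmxA -colsub_mulmx [colsub _ _ *m u]WBu0 mxE.
Qed.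

Lemma WB_interp_rel pts (a : 'cV[R]_7) m : WB B1 pts *m a = \col_k (pts k).1 ^+ 4 ->
  mon (4, 0)%N (pts m) = \sum_k a k 0 * mon (mono (B1 k)) (pts m).
Proof.
move=> /(congr1 (fun v : 'cV[R]_7 => v m 0)).
by rewrite /= WB_mulE mxE /mon /= mulr1 => ->.
Qed.

Lemma mono_deg (k : 'I_10) : ((mono k).1 + (mono k).2 <= 3)%N.
Proof. by case: k => [[|[|[|[|[|[|[|[|[|[|k]]]]]]]]]] lt_k10]. Qed.

Lemma mono_onto (e : nat * nat) : (e.1 + e.2 <= 3)%N -> exists r : 'I_10, mono r = e.
Proof.
move=> le_e3; have e_exps : e \in mono_exps.
  by case: e le_e3 => [[|[|[|[|x]]]] [|[|[|[|y]]]]].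
have lt_idx : (index e mono_exps < 10)%N by rewrite index_mem.
by exists (Ordinal lt_idx); rewrite /mono nth_index.
Qed.

Definition eval_terms (s : seq (R * (nat * nat))) z : R := \sum_(t <- s) t.1 * mon t.2 z.

Definition terms_deg_le (d : nat) (s : seq (R * (nat * nat))) : bool :=
  all (fun t => (t.2.1 + t.2.2 <= d)%N) s.

Definition sq_terms (a : 'cV[R]_10) : seq (R * (nat * nat)) :=
  [seq (a i 0 * a j 0, mono i + mono j) | i <- enum 'I_10, j <- enum 'I_10].

Lemma sq_terms_deg a : terms_deg_le 6 (sq_terms a).
Proof.
apply/allP => t /allpairsP [[i j] [_ _ ->]] /=.
by have := mono_deg i; have := mono_deg j; lia.
Qed.

Lemma eval_sq_terms a z : eval_terms (sq_terms a) z = peval3 a z ^+ 2.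
Proof.
rewrite /eval_terms big_allpairs_dep expr2 !peval3E !mxE big_distrl big_enum /=.
apply: eq_bigr => i _; rewrite big_enum big_distrr /=; apply: eq_bigr => j _.
by rewrite monD !mxE; ring.
Qed.

Lemma Riesz_sq_terms beta a : Riesz beta (sq_terms a) = (a^T *m M3 beta *m a) 0 0.
Proof.
rewrite /Riesz big_allpairs_dep mxE big_enum /=; apply: eq_bigr => i _.
rewrite big_enum mxE big_distrl /=; apply: eq_bigr => j _.
by rewrite !mxE (addnC (mono j).1) (addnC (mono j).2); ring.
Qed.

Definition shift_terms (r : 'I_10) (a : 'cV[R]_10) : seq (R * (nat * nat)) :=
  [seq (a k 0, mono r + mono k) | k <- enum 'I_10].

Lemma shift_terms_deg r a : terms_deg_le 6 (shift_terms r a).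
Proof.
rewrite /terms_deg_le all_map; apply/allP => k _ /=.
by have := mono_deg r; have := mono_deg k; lia.
Qed.

Lemma eval_shift_terms r a z : eval_terms (shift_terms r a) z = mon (mono r) z * peval3 a z.
Proof.
rewrite /eval_terms big_map big_enum peval3E mxE big_distrr /=.
by apply: eq_bigr => k _; rewrite monD !mxE; ring.
Qed.

Lemma Riesz_shift_terms beta r a : Riesz beta (shift_terms r a) = (colpoly beta a) r 0.
Proof.
rewrite /Riesz big_map big_enum mxE /=.
by apply: eq_bigr => k _; rewrite M3E mulrC.
Qed.

Lemma shifted_relation_deg a i j : (i + j <= 2)%N -> terms_deg_le 6 (shifted_relation a i j).
Proof.
move=> le_ij2; rewrite /terms_deg_le /= all_map; apply/andP; split; first by rewrite /=; lia.
by apply/allP => k _ /=; have [_] := mono_B1_bounds k; lia.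
Qed.

Lemma eval_shifted_relation a i j z :
  eval_terms (shifted_relation a i j) z =
  mon (i, j) z * (mon (4, 0) z - \sum_k a k 0 * mon (mono (B1 k)) z).
Proof.
rewrite /eval_terms big_cons big_map big_enum /= mulrBr big_distrr /= -sumrN.
congr (_ + _); first by rewrite /mon /= exprD; ring.
by apply: eq_bigr => k _; rewrite (monD (i, j)); ring.
Qed.
Lemma Riesz_shifted_relation beta a i j :
  Riesz beta (shifted_relation a i j) =
  beta (i + 4)%N j - \sum_k a k 0 * mom beta ((i, j) + mono (B1 k)).
Proof.
rewrite /Riesz big_cons big_map big_enum /= mul1r -sumrN.
by congr (_ + _); apply: eq_bigr => k _; rewrite mulNr.
Qed.

End Polynomials.

Lemma psd_gram_ge0 (R : realType) n m (W : 'M[R]_(n, m)) (r : 'rV[R]_n) (v : 'cV[R]_m) k :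
  psd (W^T *m diag_mx r *m W) -> W *m v = delta_mx k 0 -> 0 <= r 0 k.
Proof.
move=> /(_ v) + Wv.
have -> : v^T *m (W^T *m diag_mx r *m W) *m v = (W *m v)^T *m diag_mx r *m (W *m v).
  by rewrite trmx_mul !mulmxA.
rewrite Wv trmx_delta mul_mx_diag mxE (bigD1 k) //= big1 => [|j ne_jk].
  by rewrite !mxE !eqxx mul1r mulr1 addr0.
by rewrite !mxE (negbTE ne_jk) andbF mul0r mul0r.
Qed.

Section AtomicMeasure.
Context d (T : measurableType d) (R : realType) (n : nat).
Variables (pts : 'I_n.+1 -> T) (r : 'I_n.+1 -> R).
Hypothesis r_ge0 : forall k, 0 <= r k.
Local Open Scope ereal_scope.

Definition atomic_measure : {measure set T -> \bar R} :=
  msum (fun i => mscale (NngNum (r_ge0 (inord i))) \d_(pts (inord i))) n.+1.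

Lemma ge0_integral_atomic (g : T -> \bar R) : measurable_fun setT g -> (forall x, 0 <= g x) ->
  \int[atomic_measure]_x g x = \sum_k (r k)%:E * g (pts k).
Proof.
move=> mg g_ge0; rewrite ge0_integral_measure_sum //; apply: eq_bigr => k _ /=.
by rewrite ge0_integral_mscale // integral_dirac // diracT mul1e inord_val.
Qed.

Lemma integral_atomic (f : T -> R) : measurable_fun setT f ->
  atomic_measure.-integrable setT (EFin \o f) /\
  \int[atomic_measure]_x (f x)%:E = (\sum_k r k * f (pts k))%:E.
Proof.
move=> mf; have mEf : measurable_fun setT (EFin \o f) by exact/measurable_EFinP.
split.
  apply/integrableP; split => //; rewrite ge0_integral_atomic //; last exact: measurableT_comp.
  by under eq_bigr do rewrite abse_EFin -EFinM; rewrite sumEFin ltry.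
have -> : (fun x => (f x)%:E) = EFin \o f by [].
rewrite integralE (ge0_integral_atomic (measurable_funepos mEf) (funepos_ge0 _)).
rewrite (ge0_integral_atomic (measurable_funeneg mEf) (funeneg_ge0 _)) funerpos funerneg.
under eq_bigr do rewrite -EFinM; under [X in _ - X]eq_bigr do rewrite -EFinM.
rewrite !sumEFin -EFinB -sumrB; congr EFin; apply: eq_bigr => k _.
by rewrite -mulrBr -[in RHS](funrposBneg f).
Qed.

End AtomicMeasure.

Lemma mon_measurable (R : realType) e : measurable_fun setT (mon e : R * R -> R).
Proof.
apply: measurable_funM; apply: measurable_funX.
  exact: measurable_fst.
exact: measurable_snd.
Qed.

Section B1Relations.
Variable R : realType.

Lemma B1_relB (g h : nat * nat -> R) j w e :
  B1_rel g j w e -> B1_rel h j w e -> B1_rel (fun e => g e - h e) j w e.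
Proof.
rewrite /B1_rel => -> ->; rewrite -sumrB.
by apply: eq_bigr => k _; rewrite mulrBr.
Qed.

Definition atomic_mom n (w : 'cV[R]_n) (pts : 'I_n -> R * R) (e : nat * nat) : R :=
  \sum_m w m 0 * mon e (pts m).

Lemma atomic_B1_rel n (w : 'cV[R]_n) pts j (c : 'cV[R]_7) e :
  (forall m, mon j (pts m) = \sum_k c k 0 * mon (mono (B1 k)) (pts m)) ->
  B1_rel (atomic_mom w pts) j c e.
Proof.
move=> pts_rel; rewrite /B1_rel /atomic_mom.
under eq_bigr do rewrite monD pts_rel !mulr_sumr.
rewrite exchange_big; apply: eq_bigr => k _ /=.
by rewrite mulr_sumr; apply: eq_bigr => m _; rewrite monD; ring.
Qed.

End B1Relations.

Section Sufficiency.
Variables (R : realType) (beta : nat -> nat -> R) (pts : 'I_7 -> R * R).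
Variables (C : 'M[R]_(7, 10)) (a : 'cV[R]_7).
Hypothesis psdM : psd (M3 beta).
Hypothesis basisM : cols_basis B1 (M3 beta).
Hypothesis MC : M3 beta = colsub B1 (M3 beta) *m C.
Hypothesis pts_variety : forall k, variety beta (pts k).
Hypothesis WB_unit : WB B1 pts \in unitmx.
Hypothesis WBa : WB B1 pts *m a = \col_k (pts k).1 ^+ 4.
Hypothesis Riesz_x4 : forall i, (i <= 2)%N -> Riesz beta (shifted_relation a i 0) = 0.

Definition atom_weights : 'cV[R]_7 := invmx (WB B1 pts)^T *m \col_k mom beta (mono (B1 k)).

Lemma atom_weights_B1 k : atomic_mom atom_weights pts (mono (B1 k)) = mom beta (mono (B1 k)).
Proof.
have WBTu : (WB B1 pts)^T \in unitmx by rewrite unitmx_tr.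
have := congr1 (fun v : 'cV[R]_7 => v k 0) (mulKVmx WBTu (\col_l mom beta (mono (B1 l)))).
by rewrite /= [RHS]mxE => <-; rewrite mxE; apply: eq_bigr => m _; rewrite !mxE mulrC.
Qed.

Lemma beta_B1_rel (j : 'I_10) e : (e.1 + e.2 <= 3)%N -> B1_rel (mom beta) (mono j) (col j C) e.
Proof.
move=> /mono_onto[r <-]; rewrite /B1_rel -M3E {1}MC mxE.
by apply: eq_bigr => k _; rewrite !mxE mulrC.
Qed.

Lemma beta_x4_rel i : (i <= 2)%N -> B1_rel (mom beta) (4, 0)%N a (i, 0)%N.
Proof.
by move=> /Riesz_x4/eqP; rewrite Riesz_shifted_relation subr_eq0 => /eqP.
Qed.

Lemma pts_B1_rel (j : 'I_10) m :
  mon (mono j) (pts m) = \sum_k col j C k 0 * mon (mono (B1 k)) (pts m).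
Proof.
have /eqP := (varietyP (pts m) basisM MC).1 (pts_variety m).
rewrite mulmxBr mulmx1 mulmxA -colsub_mulmx subr_eq0 => /eqP/rowP/(_ j).
by rewrite !mxE => ->; apply: eq_bigr => k _; rewrite !mxE mulrC.
Qed.

Lemma moments_atomic e : (e.1 + e.2 <= 6)%N -> mom beta e = atomic_mom atom_weights pts e.
Proof.
move=> le_e6; apply/eqP; rewrite -subr_eq0; apply/eqP.
pose D e := mom beta e - atomic_mom atom_weights pts e.
apply: (B1_rel_vanish (D := D) (C := C) (a := a)) => //.
- by move=> k; rewrite /D atom_weights_B1 subrr.
- move=> j e' le_e'3; apply: B1_relB; first exact: beta_B1_rel.
  by apply: atomic_B1_rel => m; exact: pts_B1_rel.
- move=> i le_i2; apply: B1_relB; first exact: beta_x4_rel.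
  by apply: atomic_B1_rel => m; exact: WB_interp_rel.
Qed.

Lemma M3_gram : M3 beta = (Wmx pts)^T *m diag_mx atom_weights^T *m Wmx pts.
Proof.
apply/matrixP => r c; rewrite M3E moments_atomic; last first.
  by rewrite exps_addE /=; have := mono_deg r; have := mono_deg c; lia.
rewrite mul_mx_diag mxE; apply: eq_bigr => m _.
by rewrite !mxE monD /mon; ring.
Qed.

Lemma atom_weights_ge0 k : 0 <= atom_weights k 0.
Proof.
pose v : 'cV[R]_10 := colsub B1 1%:M *m (invmx (WB B1 pts) *m delta_mx k 0).
have Wv : Wmx pts *m v = delta_mx k 0 by rewrite mulmxA -colsub_mulmx mulKVmx.
by move: psdM; rewrite M3_gram => /psd_gram_ge0/(_ Wv); rewrite mxE.
Qed.

Lemma atomic_representing_measure : has_rep_measure beta.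
Proof.
exists (atomic_measure pts (fun k => atom_weights_ge0 k)) => i j le_ij6.
have [int_mon int_monE] := integral_atomic pts atom_weights_ge0 (mon_measurable (i, j)).
split; first exact: int_mon.
by rewrite [LHS]int_monE; congr EFin; symmetry; exact: (moments_atomic (e := (i, j))).
Qed.

End Sufficiency.

Section Necessity.
Variables (R : realType) (beta : nat -> nat -> R) (mu : {measure set (R * R)%type -> \bar R}).
Hypothesis mu_moments : forall i j : nat, (i + j <= 6)%N ->
  mu.-integrable setT (fun z : R * R => (z.1 ^+ i * z.2 ^+ j)%:E) /\
  (\int[mu]_z (z.1 ^+ i * z.2 ^+ j)%:E = (beta i j)%:E)%E.

Lemma integral_eval_terms s : terms_deg_le 6 s ->
  mu.-integrable setT (fun z => (eval_terms s z)%:E) /\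
  (\int[mu]_z (eval_terms s z)%:E = (Riesz beta s)%:E)%E.
Proof.
elim: s => [_ | t s IH /andP[le_t6 /IH[int_s int_sE]]].
  have -> : (fun z : R * R => (eval_terms [::] z)%:E) = cst 0%E.
    by apply/funext => z; rewrite /eval_terms big_nil.
  by split; [exact: integrable0 | rewrite integral0 /Riesz big_nil].
have [int_t int_tE] := mu_moments le_t6.
have -> : (fun z => (eval_terms (t :: s) z)%:E) =
    (fun z => t.1%:E * (mon t.2 z)%:E + (eval_terms s z)%:E)%E.
  by apply/funext => z; rewrite /eval_terms big_cons.
split; first by apply: (integrableD measurableT) => //; exact: integrableZl.
rewrite integralD //; last exact: integrableZl.
by rewrite integralZl // int_sE int_tE /Riesz big_cons.
Qed.

Lemma ker_peval3_ae0 (a : 'cV[R]_10) : colpoly beta a = 0 -> \forall z \ae mu, peval3 a z = 0.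
Proof.
move=> Ma0; have [int_sq int_sqE] := integral_eval_terms (sq_terms_deg a).
rewrite Riesz_sq_terms -mulmxA (Ma0 : M3 beta *m a = 0) mulmx0 mxE in int_sqE.
have : (\int[mu]_z `|(eval_terms (sq_terms a) z)%:E| = 0)%E.
  transitivity (\int[mu]_z (eval_terms (sq_terms a) z)%:E)%E; last by rewrite int_sqE.
  apply: eq_integral => z _.
  by rewrite abse_EFin ger0_norm // eval_sq_terms sqr_ge0.
move/(ae_eq_integral_abs mu measurableT (measurable_int mu int_sq)); rewrite /ae_eq.
apply: filterS => z /(_ I) [] /eqP.
by rewrite eval_sq_terms sqrf_eq0 => /eqP.
Qed.

Variable C : 'M[R]_(7, 10).
Hypothesis basisM : cols_basis B1 (M3 beta).
Hypothesis MC : M3 beta = colsub B1 (M3 beta) *m C.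

Lemma variety_ae : \forall z \ae mu, variety beta z.
Proof.
have col_ae j : \forall z \ae mu, (monrow z *m relation_mx B1 C) 0 j = 0.
  apply: filterS (ker_peval3_ae0 (colpoly_relation_col j MC)) => z.
  by rewrite peval3_relation_col.
apply: filterS (filter_forall _ col_ae) => z zK.
by apply/(varietyP z basisM MC)/rowP => j; rewrite zK mxE.
Qed.

Lemma Riesz_eq0_on_variety s : terms_deg_le 6 s ->
  (forall z, variety beta z -> eval_terms s z = 0) -> Riesz beta s = 0.
Proof.
move=> le_s6 s_V0; have [int_s int_sE] := integral_eval_terms le_s6.
have s_ae0 : ae_eq mu setT (fun z => (eval_terms s z)%:E) (cst 0%E).
  by apply: filterS variety_ae => z zV _; rewrite s_V0.
have := ae_eq_integral (cst 0%E) _ measurableT (measurable_int mu int_s)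
  (measurable_cst _) s_ae0.
by rewrite integral0 int_sE => -[].
Qed.

Lemma rep_measure_weakly_consistent : weakly_consistent beta.
Proof.
move=> a a_V0; apply/matrixP => r j; rewrite ord1 [RHS]mxE -Riesz_shift_terms.
apply: Riesz_eq0_on_variety; first exact: shift_terms_deg.
by move=> z zV; rewrite eval_shift_terms a_V0 ?mulr0.
Qed.

End Necessity.

Unset Implicit Arguments. Set Strict Implicit. Set Printing Implicit Defensive.

Theorem theorem4p2 (R : realType) (beta : nat -> nat -> R) (pts : 'I_7 -> R * R) :
  psd (M3 beta) ->
  pd (M2 beta) ->
  injective pts ->
  (forall z : R * R, variety beta z <-> exists k : 'I_7, pts k = z) ->
  \rank (M3 beta) = 7%N ->
  cols_basis B1 (M3 beta) ->
  let a := invmx (WB B1 pts) *m (\col_(k < 7) ((pts k).1 ^+ 4)) in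
  has_rep_measure beta <->
  (weakly_consistent beta /\
   forall i j : nat, (i + j <= 2)%N -> Riesz beta (shifted_relation a i j) = 0).
Proof.
move=> psdM _ _ V_pts _ basisM a.
have [C MC] := cols_basis_span basisM.
have V_sub z : variety beta z -> exists k, pts k = z by move/V_pts.
have pts_V k : variety beta (pts k) by apply/V_pts; exists k.
have WBa : weakly_consistent beta -> WB B1 pts *m a = \col_k (pts k).1 ^+ 4.
  by move=> wc; rewrite mulKVmx // (WB_unitmx basisM V_sub wc).
split => [[mu mu_moments] | [wc Riesz_x4]].
  have wc := rep_measure_weakly_consistent mu_moments basisM MC.
  split=> // i j le_ij2.
  apply: (Riesz_eq0_on_variety mu_moments basisM MC); first exact: shifted_relation_deg.
  move=> z /V_sub[m <-].
  by rewrite eval_shifted_relation -(WB_interp_rel m (WBa wc)) subrr mulr0.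
apply: (atomic_representing_measure psdM basisM MC pts_V (WB_unitmx basisM V_sub wc) (WBa wc)).
by move=> i le_i2; apply: Riesz_x4; rewrite addn0.
Qed.
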